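(* For a prime $p$ and integer $d \ge 1$, let $t = \lfloor 2d/(p-1) \rfloor$ and \[ B'(p,d) = 2 + \left\lfloor \frac{pt + (p-1)\lambda_p(t)}{d} \right\rfloor, \] where for $m = \sum_{i=0}^s c_i p^i$ with $0 \le c_i < p$ one sets $\lambda_p(m) = \sum_{i=0}^s i c_i p^i$. Then: \begin{enumerate} \item If $p \ge 5$ and $p \ge d$, then $B'(p,d) = 2$ if $p > 2d+1$; $B'(p,d) = 4$ if $p = 2d+1$ or $p = d$; and $B'(p,d) = 3$ if $d+1 < p < 2d+1$. \item If $5 \le p \le d$, then $B'(p,d) \ge 3$. \item $B'(3,1) = B'(3,2) = 5$, and $B'(3,d) \ge 6$ for $d \ge 3$. \item $B'(2,1) = 8$, $B'(2,2) = 10$, $B'(2,3) = 9$, and $B'(2,d) \ge 9$ for $d \ge 4$. \item For any prime $p$, if $(p-1) \mid 2d$, then $B'(p,d) \ge 4 + 2 v_p(d) + 4 v_2(p) + v_p(3)$, with equality when $\frac{2d}{p^{v_p(2d)}(p-1)} < p$. \end{enumerate}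
   Context: $v_p$ denotes the $p$-adic valuation (so $v_2(p) = 1$ if $p = 2$ and $0$ otherwise, and $v_p(3) = 1$ if $p=3$ and $0$ otherwise). Note $B'(p,d) = \lfloor B(p,d)/d \rfloor$ where $B(p,d) = 2d + pt + (p-1)\lambda_p(t)$ is the Brumer–Kramer conductor bound. *)

From mathcomp Require Import all_boot.
Set Implicit Arguments. Unset Strict Implicit. Unset Printing Implicit Defensive.

(* Base-p digit c_i of m : (m %/ p^i) %% p.  For p >= 2 all digits of index
   i > m vanish, so summing over i < m.+1 covers every digit. *)
Definition lambda_p (p m : nat) : nat :=
  \sum_(i < m.+1) i * ((m %/ p ^ i) %% p) * p ^ i.

Definition tpd (p d : nat) : nat := (2 * d) %/ (p - 1).

Definition Bprime (p d : nat) : nat :=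
  2 + (p * tpd p d + (p - 1) * lambda_p p (tpd p d)) %/ d.

From mathcomp Require Import all_boot zify.

(* The digit sum lambda_p satisfies lambda_p(m) = p (lambda_p(m/p) + m/p); hence it
   vanishes below p, is at least p floor(m/p), and
   lambda_p(c p^k) = p^k lambda_p(c) + k c p^k.
   When (p-1) | 2d we have t (p-1) = 2d, and writing t = c p^k with k = v_p(2d)
   the numerator of B'(p,d) becomes 2kd + pt + (p-1) p^k lambda_p(c), where
   pt/d = 2p/(p-1) is 4 for p = 2, 3 for p = 3 and in [2,3) for p >= 5; the
   extra term vanishes when c < p.  In the other cases t is small
   (or p is 2 or 3) and B' is estimated directly from these facts. *)

Set Implicit Arguments.
Unset Strict Implicit.
Unset Printing Implicit Defensive.

Lemma divn_eq_of_bounds n d q : 0 < d -> q * d <= n < q.+1 * d -> n %/ d = q.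
Proof.
move=> d_gt0 /andP[lb ub].
by apply/eqP; rewrite eqn_leq andbC leq_divRL // lb -ltnS ltn_divLR.
Qed.

Section Digits.

Variable p : nat.
Hypothesis p_gt1 : 1 < p.

Definition digit (m i : nat) : nat := (m %/ p ^ i) %% p.

Lemma digit_small m i : m < p ^ i -> digit m i = 0.
Proof. by move=> lt_m_pi; rewrite /digit divn_small ?mod0n. Qed.

Lemma digitS m i : digit m i.+1 = digit (m %/ p) i.
Proof. by rewrite /digit expnS divnMA. Qed.

Lemma sum_digits m n : m < p ^ n -> \sum_(i < n) digit m i * p ^ i = m.
Proof.
elim: n m => [|n IHn] m lt_m_pn.
  by move: lt_m_pn; rewrite big_ord0 expn0 ltnS leqn0 => /eqP ->.
have lt_mp_pn : m %/ p < p ^ n by rewrite ltn_divLR ?(ltnW p_gt1) // -expnSr.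
rewrite big_ord_recl /digit expn0 divn1 muln1.
under eq_bigr => i _ do rewrite lift0 -/(digit m i.+1) digitS expnS mulnCA.
by rewrite -big_distrr /= IHn // addnC mulnC -divn_eq.
Qed.

Lemma big_digit_widen (w : nat -> nat) m n n' : m < p ^ n -> n <= n' ->
  \sum_(i < n') w i * digit m i * p ^ i = \sum_(i < n) w i * digit m i * p ^ i.
Proof.
move=> lt_m_pn le_nn'.
rewrite [RHS](big_ord_widen n' (fun i => w i * digit m i * p ^ i) le_nn').
rewrite [RHS]big_mkcond /=; apply: eq_bigr => i _; case: ltnP => // le_ni.
by rewrite digit_small ?muln0 ?mul0n // (leq_trans lt_m_pn) // leq_pexp2l // (ltnW p_gt1).
Qed.

Lemma lambda_pE m n : m < p ^ n -> lambda_p p m = \sum_(i < n) i * digit m i * p ^ i.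
Proof.
move=> lt_m_pn.
have lt_m_pm : m < p ^ m.+1.
  exact: leq_trans (ltn_expl m p_gt1) (leq_pexp2l (ltnW p_gt1) (leqnSn m)).
case: (leqP n m.+1) => [le_n_m1 | /ltnW le_m1_n].
  exact: (big_digit_widen id lt_m_pn le_n_m1).
by symmetry; apply: (big_digit_widen id lt_m_pm le_m1_n).
Qed.

Lemma lambda_p_small m : m < p -> lambda_p p m = 0.
Proof. by move=> lt_mp; rewrite (@lambda_pE m 1) ?expn1 // big_ord1. Qed.

Lemma lambda_p_rec m : lambda_p p m = p * (lambda_p p (m %/ p) + m %/ p).
Proof.
have lt_mp_pm : m %/ p < p ^ m := leq_ltn_trans (leq_div m p) (ltn_expl m p_gt1).
rewrite (lambda_pE lt_mp_pm) -{2}(sum_digits lt_mp_pm) -big_split big_distrr.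
rewrite /lambda_p big_ord_recl mul0n add0n; apply: eq_bigr => i _.
rewrite lift0 -/(digit m i.+1) digitS expnS /=; nia.
Qed.

Lemma lambda_p_mulnp m : lambda_p p (m * p) = p * (lambda_p p m + m).
Proof. by rewrite lambda_p_rec mulnK // ltnW. Qed.

Lemma lambda_p_mul_expn m k :
  lambda_p p (m * p ^ k) = p ^ k * lambda_p p m + k * (m * p ^ k).
Proof.
elim: k => [|k IHk]; first by rewrite !expn0 !muln1 mul1n addn0.
by rewrite expnSr mulnA lambda_p_mulnp IHk; lia.
Qed.

Lemma lambda_p_ge m : p * (m %/ p) <= lambda_p p m.
Proof. by rewrite lambda_p_rec leq_mul2l leq_addl orbT. Qed.

End Digits.

Lemma Bprime_tpd_small p d :
  1 < p -> tpd p d < p -> Bprime p d = 2 + (p * tpd p d) %/ d.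
Proof. by move=> p_gt1 t_small; rewrite /Bprime lambda_p_small // muln0 addn0. Qed.

Lemma Bprime_ge p d : 2 + (p * tpd p d) %/ d <= Bprime p d.
Proof. by rewrite leq_add2l leq_div2r // leq_addr. Qed.

Lemma Bprime_large_p p d : prime p -> 1 <= d -> 5 <= p -> d <= p ->
  (2 * d + 1 < p -> Bprime p d = 2) /\
  ((p = 2 * d + 1 \/ p = d) -> Bprime p d = 4) /\
  (d + 1 < p < 2 * d + 1 -> Bprime p d = 3).
Proof.
move=> p_pr d_gt0 p_ge5 le_dp; have p_gt1 : 1 < p by lia.
split; [|split].
- move=> lt_2d1_p; have t0 : tpd p d = 0 by rewrite /tpd divn_small //; lia.
  by rewrite Bprime_tpd_small ?t0 ?muln0 ?div0n //; lia.
- case=> p_eq.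
  + have t1 : tpd p d = 1 by rewrite /tpd; apply: divn_eq_of_bounds; lia.
    by rewrite Bprime_tpd_small ?t1 ?muln1 ?(@divn_eq_of_bounds _ _ 2) //; lia.
  + have t2 : tpd p d = 2 by rewrite /tpd; apply: divn_eq_of_bounds; lia.
    by rewrite Bprime_tpd_small ?t2 ?(@divn_eq_of_bounds _ _ 2) //; lia.
- move=> /andP[lt_d1_p lt_p_2d1].
  have t1 : tpd p d = 1 by rewrite /tpd; apply: divn_eq_of_bounds; lia.
  have p_neq_2d : p != 2 * d.
    case: (even_prime p_pr) => [p2 | odd_p]; first by rewrite p2; lia.
    by apply: contraTneq odd_p => ->; rewrite oddM.
  by rewrite Bprime_tpd_small ?t1 ?muln1 ?(@divn_eq_of_bounds _ _ 1) //; lia.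
Qed.

Lemma leq_mul_tpd p d : 1 < p -> p - 2 <= d -> d <= p * tpd p d.
Proof.
move=> p_gt1 le_p2_d; rewrite /tpd.
have := divn_eq (2 * d) (p - 1); have : 2 * d %% (p - 1) < p - 1 by rewrite ltn_pmod //; lia.
nia.
Qed.

Lemma Bprime_ge3 p d : 1 < p -> 0 < d -> p - 2 <= d -> 3 <= Bprime p d.
Proof.
move=> p_gt1 d_gt0 le_p2_d.
have : 1 <= (p * tpd p d) %/ d by rewrite leq_divRL // mul1n leq_mul_tpd.
by have := Bprime_ge p d; lia.
Qed.

Lemma Bprime3 :
  Bprime 3 1 = 5 /\ Bprime 3 2 = 5 /\ forall d, 3 <= d -> 6 <= Bprime 3 d.
Proof.
repeat split; try by rewrite /Bprime /tpd /lambda_p !big_ord_recr big_ord0.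
move=> d le_3d.
have -> : Bprime 3 d = 2 + (3 * d + 2 * lambda_p 3 d) %/ d by rewrite /Bprime /tpd mulKn.
suff : 4 <= (3 * d + 2 * lambda_p 3 d) %/ d by lia.
have := lambda_p_ge (isT : 1 < 3) d; have := divn_eq d 3; have := ltn_pmod d (isT : 0 < 3).
rewrite leq_divRL; lia.
Qed.

Lemma Bprime2 :
  Bprime 2 1 = 8 /\ Bprime 2 2 = 10 /\ Bprime 2 3 = 9 /\
  forall d, 4 <= d -> 9 <= Bprime 2 d.
Proof.
repeat split; try by rewrite /Bprime /tpd /lambda_p !big_ord_recr big_ord0.
move=> d le_4d.
have -> : Bprime 2 d = 2 + (6 * d + 2 * lambda_p 2 d) %/ d.
  have tpd2 : tpd 2 d = d * 2 by rewrite /tpd divn1 mulnC.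
  by rewrite /Bprime tpd2 lambda_p_mulnp //; congr (2 + _ %/ d); lia.
suff : 7 <= (6 * d + 2 * lambda_p 2 d) %/ d by lia.
have := lambda_p_ge (isT : 1 < 2) d; have := divn_eq d 2; have := ltn_pmod d (isT : 0 < 2).
rewrite leq_divRL; lia.
Qed.

Section DivisibleCase.

Variables p d : nat.
Hypotheses (p_pr : prime p) (d_gt0 : 0 < d) (dvd_p1_2d : (p - 1) %| 2 * d).

Let p_gt1 : 1 < p := prime_gt1 p_pr.
Let k := logn p (2 * d).
Let c := (2 * d) %/ (p ^ k * (p - 1)).

Lemma tpdK : tpd p d * (p - 1) = 2 * d.
Proof. exact: divnK. Qed.

Lemma logn_tpd : logn p (tpd p d) = k.
Proof.
have tpd_gt0 : 0 < tpd p d by have := tpdK; nia.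
by rewrite /k -tpdK lognM ?subn_gt0 // (@ltn_log0 p (p - 1)) ?addn0 //; lia.
Qed.

Lemma tpd_eq : tpd p d = c * p ^ k.
Proof.
rewrite /c [p ^ k * _]mulnC divnMA -/(tpd p d) divnK //.
by rewrite -logn_tpd pfactor_dvdnn.
Qed.

Lemma logn_2d : k = logn p d + (p == 2).
Proof. by rewrite /k lognM // logn_prime // addnC. Qed.

Lemma mul_tpd_div : (p * tpd p d) %/ d = 2 + 2 * (p == 2) + (p == 3).
Proof.
case: (ltngtP p 3) => [lt_p3 | gt_p3 | p3]; apply: divn_eq_of_bounds => //.
- have p2 : p = 2 by lia.
  by move: tpdK; rewrite p2 /=; lia.
- have -> : (p == 2) = false by apply/eqP; lia.
  by have := tpdK; nia.
- by move: tpdK; rewrite p3 /=; lia.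
Qed.

Lemma Bprime_dvdE :
  Bprime p d = 2 + 2 * k + (p * tpd p d + (p - 1) * (p ^ k * lambda_p p c)) %/ d.
Proof.
rewrite /Bprime {2}tpd_eq lambda_p_mul_expn // -tpd_eq -addnA -[2 * k + _](divnMDl _ _ d_gt0).
by congr (2 + _ %/ d); have := tpdK; nia.
Qed.

Lemma Bprime_dvd_ge : 2 + 2 * k + (p * tpd p d) %/ d <= Bprime p d.
Proof. by rewrite Bprime_dvdE leq_add2l leq_div2r // leq_addr. Qed.

Lemma Bprime_dvd_eq : c < p -> Bprime p d = 2 + 2 * k + (p * tpd p d) %/ d.
Proof. by move=> lt_cp; rewrite Bprime_dvdE lambda_p_small // !muln0 addn0. Qed.

Lemma Bprime_dvd_bound :
  2 + 2 * k + (p * tpd p d) %/ d = 4 + 2 * logn p d + 4 * logn 2 p + logn p 3.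
Proof.
rewrite mul_tpd_div logn_2d (logn_prime 2 p_pr) (logn_prime p (isT : prime 3)).
by rewrite [2 == p]eq_sym; lia.
Qed.

Lemma Bprime_dvd :
  4 + 2 * logn p d + 4 * logn 2 p + logn p 3 <= Bprime p d /\
  ((2 * d) %/ (p ^ logn p (2 * d) * (p - 1)) < p ->
     Bprime p d = 4 + 2 * logn p d + 4 * logn 2 p + logn p 3).
Proof.
rewrite -Bprime_dvd_bound; split; first exact: Bprime_dvd_ge.
exact: Bprime_dvd_eq.
Qed.

End DivisibleCase.

Theorem lemma3p2 :
  (* (1) *)
  (forall p d : nat, prime p -> 1 <= d -> 5 <= p -> d <= p ->
     (2 * d + 1 < p -> Bprime p d = 2) /\
     ((p = 2 * d + 1 \/ p = d) -> Bprime p d = 4) /\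
     (d + 1 < p < 2 * d + 1 -> Bprime p d = 3)) /\
  (* (2) *)
  (forall p d : nat, prime p -> 1 <= d -> 5 <= p <= d -> 3 <= Bprime p d) /\
  (* (3) *)
  (Bprime 3 1 = 5 /\ Bprime 3 2 = 5 /\
   forall d : nat, 3 <= d -> 6 <= Bprime 3 d) /\
  (* (4) *)
  (Bprime 2 1 = 8 /\ Bprime 2 2 = 10 /\ Bprime 2 3 = 9 /\
   forall d : nat, 4 <= d -> 9 <= Bprime 2 d) /\
  (* (5) *)
  (forall p d : nat, prime p -> 1 <= d -> (p - 1) %| 2 * d ->
     4 + 2 * logn p d + 4 * logn 2 p + logn p 3 <= Bprime p d /\
     ((2 * d) %/ (p ^ logn p (2 * d) * (p - 1)) < p ->
        Bprime p d = 4 + 2 * logn p d + 4 * logn 2 p + logn p 3)).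
Proof.
split; first exact: Bprime_large_p.
split.
  by move=> p d _ d_gt0 /andP[p_ge5 le_pd]; apply: Bprime_ge3 => //; lia.
split; first exact: Bprime3.
split; first exact: Bprime2.
move=> p d p_pr d_gt0; exact: Bprime_dvd.
Qed.
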